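(* Let $n\ge 2d$. A symmetric form $f$ of degree $2d$ in $n$ variables is a sum of squares of forms in $T$ if and only if $f=\langle Q_1,A\rangle+\langle Q_2,B\rangle$ for some positive semidefinite real matrices $Q_1$ (of size $\pi(d)\times\pi(d)$) and $Q_2$ (of size $N\times N$, $N=\sum_{a=1}^d\pi(d-a)$).
   Context: $p_i=\frac1n(x_1^i+\dots+x_n^i)$, $p_\mu=\prod_i p_{\mu_i}$ for a partition $\mu$ (with $p_\emptyset=1$ for the empty partition of $0$). $\pi(k)$ = number of partitions of $k$. $H_{n,d}$ is the space of forms of degree $d$ in $n$ variables and $H^S_{n,k}$ the symmetric ones; $\mathcal{S}_n$ acts by permuting variables. $T\subseteq H_{n,d}$ is the $\mathcal{S}_n$-submodule generated by $H^S_{n,d}$ together with all forms $(x_1^a-x_2^a)g$ with $a\in\{1,\dots,d\}$ and $g\in H^S_{n,d-a}$. Let $\lambda_1,\dots,\lambda_{\pi(d)}$ be the partitions of $d$ and for $a\in\{1,\dots,d\}$ let $\mu^a_1,\dots,\mu^a_{\pi(d-a)}$ be the partitions of $d-a$. $A$ is the $\pi(d)\times\pi(d)$ matrix with $A_{i,j}=p_{\lambda_i}p_{\lambda_j}$. $B$ is the block matrix with blocks $B_{a,b}$ ($a,b\in\{1,\dots,d\}$) of size $\pi(d-a)\times\pi(d-b)$ with entries $(B_{a,b})_{i,j}=p_{\mu^a_i}p_{\mu^b_j}(p_{a+b}-p_ap_b)$. For symmetric matrices, $\langle X,Y\rangle=\operatorname{trace}(XY)$. *)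

From HB Require Import structures.
From mathcomp Require Import all_boot all_order all_algebra all_fingroup.
From mathcomp Require Import reals.
From mathcomp Require Import mpoly.
Set Implicit Arguments. Unset Strict Implicit. Unset Printing Implicit Defensive.
Import Order.TTheory GRing.Theory Num.Theory.
Local Open Scope ring_scope.

Section Defs.
Variables (R : realType) (n : nat).

Definition form (d : nat) (f : {mpoly R[n]}) : Prop := f \is d.-homog.

Definition symform (d : nat) (f : {mpoly R[n]}) : Prop :=
  f \is d.-homog /\ f \is symmetric.

(* Generators of T, together with all their images under S_n:
   permuted symmetric forms of degree d, and permuted
   (x_1^a - x_2^a) g with 1 <= a <= d, g in H^S_{n,d-a}.
   x_1, x_2 are the variables of index 0 and 1. *)
Definition T_gen (d : nat) (p : {mpoly R[n]}) : Prop :=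
  (exists (s : 'S_n) (h : {mpoly R[n]}), symform d h /\ p = msym s h) \/
  (exists (s : 'S_n) (a : nat) (i j : 'I_n) (g : {mpoly R[n]}),
     [/\ (1 <= a <= d)%N, val i = 0%N, val j = 1%N, symform (d - a) g &
         p = msym s (('X_i ^+ a - 'X_j ^+ a) * g)]).

(* T: the S_n-submodule (R-linear subspace stable under permutation of the
   variables) generated by the above; i.e. the R-span of the S_n-orbits of
   the generators. *)
Definition inT (d : nat) (q : {mpoly R[n]}) : Prop :=
  exists s : seq (R * {mpoly R[n]}),
    (forall x, x \in s -> T_gen d x.2) /\ q = \sum_(x <- s) x.1 *: x.2.

Definition sos_T (d : nat) (f : {mpoly R[n]}) : Prop :=
  exists qs : seq {mpoly R[n]},
    (forall q, q \in qs -> inT d q) /\ f = \sum_(q <- qs) q ^+ 2.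

Definition psum (i : nat) : {mpoly R[n]} :=
  (n%:R)^-1 *: \sum_(j < n) 'X_j ^+ i.

End Defs.

(* Partitions of k, encoded by multiplicity vectors: m i is the number of
   parts equal to i+1. *)
Definition partT (k : nat) :=
  {m : {ffun 'I_k -> 'I_k.+1} | (\sum_(i < k) i.+1 * m i)%N == k}.

Definition npart (k : nat) : nat := #|{: partT k}|.

Definition pmu (R : realType) (n k : nat) (mu : partT k) : {mpoly R[n]} :=
  \prod_(i < k) psum R n i.+1 ^+ (val mu i).

Definition lam (k : nat) (i : 'I_(npart k)) : partT k := enum_val i.

Definition matA (R : realType) (n d : nat) : 'M[{mpoly R[n]}]_(npart d) :=
  \matrix_(i, j) (pmu R n (lam i) * pmu R n (lam j)).

(* Index set of B: pairs (a, mu) with a in {1..d} (stored as a' = a-1 : 'I_d)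
   and mu a partition of d - a.  Its cardinality is N = sum_a pi(d-a). *)
Definition BIdx (d : nat) := {a : 'I_d & partT (d - a.+1)}.

Definition Nsize (d : nat) : nat := #|{: BIdx d}|.

Definition matB (R : realType) (n d : nat) : 'M[{mpoly R[n]}]_(Nsize d) :=
  \matrix_(i, j)
    let x := (enum_val i : BIdx d) in let y := (enum_val j : BIdx d) in
    let a := (tag x).+1 in let b := (tag y).+1 in
    pmu R n (tagged x) * pmu R n (tagged y) *
    (psum R n (a + b) - psum R n a * psum R n b).

Definition psd (R : realType) (m : nat) (Q : 'M[R]_m) : Prop :=
  Q^T = Q /\ forall v : 'cV[R]_m, 0 <= (v^T *m Q *m v) 0 0.

Definition mxinner (R : realType) (n m : nat) (Q : 'M[R]_m)
  (M : 'M[{mpoly R[n]}]_m) : {mpoly R[n]} :=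
  \tr (map_mx (fun c : R => c%:MP_[n]) Q *m M).

From HB Require Import structures.
From mathcomp Require Import all_boot all_order all_algebra all_fingroup.
From mathcomp Require Import reals.
From mathcomp Require Import mpoly.
From mathcomp Require Import ring zify.
Import Order.TTheory GRing.Theory Num.Theory.
Local Open Scope ring_scope.
Set Implicit Arguments. Unset Strict Implicit. Unset Printing Implicit Defensive.

(* Both directions go through the Reynolds operator [symavg] of S_n.  Every q in
   T can be written [s + sum_(a, mu) p_mu (sum_k V_k x_k^a)] with s symmetric and
   each coefficient row V summing to zero, and by Newton's identities the
   symmetric forms are spanned by the p_mu.  Averaging q^2 kills the cross term,
   and since the average of x_k^a x_l^b only depends on whether k = l, it turns
   q^2 into <al al^T, A> + n/(n-1) <V V^T, B>.  A symmetric f = sum q^2 is its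
   own average, which gives Q1 and Q2.  Conversely, a PSD matrix is a sum of
   rank-one matrices v^T v (symmetric Gaussian elimination); <v^T v, A> is the
   square of a symmetric form, and by
     sum_(k,l) (x_k^a - x_l^a) (x_k^b - x_l^b) = 2 n^2 (p_(a+b) - p_a p_b)
   the form <v^T v, B> is a sum of squares of combinations of the
   (x_k^a - x_l^a) p_mu, which lie in T. *)

Section NewtonIdentities.
Variables (R : comNzRingType) (n : nat).
Local Notation P := {mpoly R[n]}.

Definition powersum (i : nat) : P := \sum_(j < n) 'X_j ^+ i.

Lemma big_card_pointed_sets (M : nmodType) m (F : {set 'I_n} -> 'I_n -> M) :
  \sum_(h : {set 'I_n} | #|h| == m.+1) \sum_(j in h) F h j =
  \sum_(h : {set 'I_n} | #|h| == m) \sum_(j | j \notin h) F (j |: h) j.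
Proof.
rewrite (exchange_big_dep xpredT) //= [RHS](exchange_big_dep xpredT) //=.
apply: eq_bigr => j _.
rewrite (reindex_onto (fun g => j |: g) (fun g => g :\ j)) /=; last first.
  by move=> g /andP[_ jg]; rewrite setD1K.
apply: eq_bigl => g; case jg: (j \in g).
  rewrite andbF; apply/negbTE; apply/negP => /andP[_ /eqP E].
  by move: jg; rewrite -E setD11.
by rewrite setU1K ?jg // eqxx andbT setU11 andbT cardsU1 jg add1n eqSS /= andbT.
Qed.

Section NewtonIdentity.
Variable k : nat.

(* [newton_term i] collects the monomials of [e_(k-i-1) * p_(i+1)] whose
   variable raised to [i+1] does not divide the [e] factor; the other monomials
   form [newton_term i.+1], so Newton's identity telescopes. *)
Definition newton_term i : P :=
  if (i < k)%N then
    \sum_(h : {set 'I_n} | #|h| == (k - i.+1)%N)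
      \sum_(j | j \notin h) 'X_j ^+ i.+1 * \prod_(l in h) 'X_l
  else 0.

Lemma newton_term0 : newton_term 0 = k%:R * mesym n R k.
Proof.
rewrite /newton_term; case: k => [|k']; first by rewrite mul0r.
rewrite subn1 /=.
transitivity (\sum_(h : {set 'I_n} | #|h| == k')
                \sum_(j | j \notin h) \prod_(l in j |: h) ('X_l : P)).
  by apply: eq_bigr => h _; apply: eq_bigr => j jh; rewrite big_setU1 ?expr1.
rewrite -(big_card_pointed_sets k' (fun h _ => \prod_(l in h) ('X_l : P))).
rewrite /mesym mulr_sumr; apply: eq_bigr => h /eqP hk.
by rewrite sumr_const hk mulr_natl.
Qed.

Lemma mesymM_powersum i : (i < k)%N ->
  mesym n R (k - i.+1) * powersum i.+1 = newton_term i + newton_term i.+1.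
Proof.
move=> ik; rewrite /newton_term ik /mesym mulr_suml.
have -> : \sum_(h : {set 'I_n} | #|h| == (k - i.+1)%N)
            (\prod_(l in h) 'X_l) * powersum i.+1 =
          \sum_(h : {set 'I_n} | #|h| == (k - i.+1)%N)
            \sum_(j | j \notin h) 'X_j ^+ i.+1 * \prod_(l in h) 'X_l +
          \sum_(h : {set 'I_n} | #|h| == (k - i.+1)%N)
            \sum_(j in h) 'X_j ^+ i.+1 * \prod_(l in h) 'X_l.
  rewrite -big_split /=; apply: eq_bigr => h _.
  rewrite /powersum mulr_sumr (bigID (fun j => j \in h)) addrC /=.
  by congr (_ + _); apply: eq_bigr => j _; rewrite mulrC.
congr (_ + _); case: ltnP => ik1.
  rewrite -subnSK // big_card_pointed_sets; apply: eq_bigr => h _.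
  by apply: eq_bigr => j jh; rewrite big_setU1 //= mulrA -exprSr.
have -> : (k - i.+1 = 0)%N by apply/eqP; rewrite subn_eq0.
by rewrite big1 // => h /eqP/cards0_eq ->; rewrite big1 // => j; rewrite inE.
Qed.

Lemma newton_mesym :
  k%:R * mesym n R k =
  \sum_(i < k) (-1) ^+ i * (mesym n R (k - i.+1) * powersum i.+1).
Proof.
pose f i := - ((-1) ^+ i * newton_term i).
rewrite -newton_term0 -(big_mkord xpredT
  (fun i => (-1) ^+ i * (mesym n R (k - i.+1) * powersum i.+1))).
rewrite (@telescope_sumr_eq _ _ _ f) // => [|i /andP[_ ik]].
  by rewrite /f /newton_term ltnn mulr0 oppr0 expr0 mul1r opprK add0r.
by rewrite mesymM_powersum // /f exprS; ring.
Qed.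

End NewtonIdentity.
End NewtonIdentities.

Section PowerSumSpan.
Variables (R : realType) (n : nat).
Local Notation P := {mpoly R[n]}.

Definition composition (k : nat) (s : seq nat) := all (leq 1) s && (sumn s == k).

Definition psprod (s : seq nat) : P := \prod_(j <- s) psum R n j.

(* Compositions rather than partitions, so that the span is closed under
   products. *)
Definition psum_span (k : nat) (g : P) : Prop :=
  exists l : seq (R * seq nat),
    (forall x, x \in l -> composition k x.2) /\ g = \sum_(x <- l) x.1 *: psprod x.2.

Lemma psum_span0 k : psum_span k 0.
Proof. by exists [::]; rewrite big_nil. Qed.

Lemma psum_span_psprod k s : composition k s -> psum_span k (psprod s).
Proof.
move=> ks; exists [:: (1, s)]; split; last by rewrite big_seq1 scale1r.
by move=> x; rewrite inE => /eqP ->.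
Qed.

Lemma psum_span1 : psum_span 0 1.
Proof. by have := @psum_span_psprod 0 [::] isT; rewrite /psprod big_nil. Qed.

Lemma psum_span_psum j : psum_span j.+1 (psum R n j.+1).
Proof.
have := @psum_span_psprod j.+1 [:: j.+1]; rewrite /psprod big_seq1; apply.
by rewrite /composition /= addn0 eqxx.
Qed.

Lemma psum_spanD k g h : psum_span k g -> psum_span k h -> psum_span k (g + h).
Proof.
move=> [l1 [H1 ->]] [l2 [H2 ->]]; exists (l1 ++ l2); rewrite big_cat.
by split=> // x; rewrite mem_cat => /orP[/H1|/H2].
Qed.

Lemma psum_spanZ k c g : psum_span k g -> psum_span k (c *: g).
Proof.
move=> [l [H ->]]; exists [seq (c * x.1, x.2) | x <- l]; split.
  by move=> _ /mapP[x /H + ->].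
by rewrite big_map scaler_sumr; apply: eq_bigr => x _; rewrite scalerA.
Qed.

Lemma psum_span_sum k (I : Type) (r : seq I) (Q : pred I) (F : I -> P) :
  (forall i, Q i -> psum_span k (F i)) -> psum_span k (\sum_(i <- r | Q i) F i).
Proof. by move=> H; apply: big_ind => //; [apply: psum_span0 | apply: psum_spanD]. Qed.

Lemma psum_spanM a b g h :
  psum_span a g -> psum_span b h -> psum_span (a + b) (g * h).
Proof.
move=> [l1 [H1 ->]] [l2 [H2 ->]].
exists [seq (x.1 * y.1, x.2 ++ y.2) | x <- l1, y <- l2]; split.
  move=> _ /allpairsP[[x y] /= [/H1 /andP[x1 /eqP x2] /H2 /andP[y1 /eqP y2] ->]].
  by rewrite /composition all_cat x1 y1 sumn_cat x2 y2 /=.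
rewrite big_allpairs_dep mulr_suml; apply: eq_bigr => x _.
rewrite mulr_sumr; apply: eq_bigr => y _.
by rewrite /psprod big_cat -scalerAl -scalerAr scalerA.
Qed.

Lemma psum_span_prod (I : Type) (r : seq I) (w : I -> nat) (F : I -> P) :
  (forall i, psum_span (w i) (F i)) ->
  psum_span (\sum_(i <- r) w i) (\prod_(i <- r) F i).
Proof.
move=> H; elim: r => [|x r IH]; last by rewrite !big_cons; apply: psum_spanM.
by rewrite !big_nil; apply: psum_span1.
Qed.

Lemma psum_spanX a e g : psum_span a g -> psum_span (e * a) (g ^+ e).
Proof.
move=> Hg; elim: e => [|e IH]; first by rewrite mul0n expr0; apply: psum_span1.
by rewrite exprS mulSn; apply: psum_spanM.
Qed.

Lemma sum_var_exp j : (0 < n)%N -> \sum_(l < n) ('X_l ^+ j : P) = n%:R *: psum R n j.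
Proof. by move=> n0; rewrite /psum scalerA mulfV ?scale1r // pnatr_eq0 -lt0n. Qed.

Lemma mesym_psum_span k : (0 < n)%N -> psum_span k (mesym n R k).
Proof.
move=> n0; elim/ltn_ind: k => -[_ |k IH].
  rewrite /mesym (big_pred1 set0) => [|h]; last by rewrite cards_eq0.
  by rewrite big_set0; apply: psum_span1.
have kS : (k.+1%:R : R) != 0 by rewrite pnatr_eq0.
rewrite -[mesym _ _ _]scale1r -(mulVf kS) -scalerA scaler_nat.
apply: psum_spanZ; rewrite -mulr_natl newton_mesym; apply: psum_span_sum => i _.
rewrite /powersum sum_var_exp // -scalerAr -(rmorph_sign (@mpolyC n R)) mul_mpolyC.
do 2!apply: psum_spanZ.
have := psum_spanM (IH (k.+1 - i.+1)%N (leq_subr _ _)) (psum_span_psum i).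
by rewrite subnK.
Qed.

Lemma sym_psum_span k g : g \is symmetric -> g \is k.-homog -> psum_span k g.
Proof.
move=> gs gh; have [t [<- /dhomogP th]] := sym_fundamental_homog gs gh.
rewrite comp_mpolyEX big_seq; apply: psum_span_sum => m mt; apply: psum_spanZ.
rewrite comp_mpolyX -(th m mt) /mnmwgt; apply: psum_span_prod => i.
rewrite tnth_mktuple; apply: psum_spanX; apply: mesym_psum_span.
exact: leq_ltn_trans (leq0n i) (ltn_ord i).
Qed.

Lemma sum_count_mem_succ k s : all (fun j => 0 < j <= k)%N s ->
  (\sum_(i < k) i.+1 * count_mem i.+1 s)%N = sumn s.
Proof.
elim: s => [_|x s IH /= /andP[/andP[]]]; first by rewrite big1 // => i; rewrite muln0.
case: x => // x _ xk /IH <-.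
rewrite (eq_bigr (fun i : 'I_k => i.+1 * (x == i) + i.+1 * count_mem i.+1 s)%N); last first.
  by move=> i _; rewrite -mulnDr eqSS.
rewrite big_split /= (bigD1 (Ordinal xk)) //= eqxx muln1 big1 ?addn0 // => i.
by rewrite -val_eqE eq_sym /= => /negbTE ->; rewrite muln0.
Qed.

Lemma prod_count_mem_succ k s (F : nat -> P) : all (fun j => 0 < j <= k)%N s ->
  \prod_(i < k) F i.+1 ^+ count_mem i.+1 s = \prod_(j <- s) F j.
Proof.
elim: s => [_|x s IH /= /andP[/andP[]]]; first by rewrite big_nil big1 // => i.
case: x => // x _ xk /IH; rewrite big_cons => <-.
rewrite (eq_bigr (fun i : 'I_k => F i.+1 ^+ (x == i) * F i.+1 ^+ count_mem i.+1 s));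
  last first.
  by move=> i _; rewrite -exprD eqSS.
rewrite big_split /= (bigD1 (Ordinal xk)) //= eqxx expr1 big1 ?mulr1 // => i.
by rewrite -val_eqE eq_sym /= => /negbTE ->; rewrite expr0.
Qed.

Lemma composition_pmu k s :
  composition k s -> exists mu : partT k, pmu R n mu = psprod s.
Proof.
case/andP=> s_pos /eqP sk.
have s_le : all (fun j => 0 < j <= k)%N s.
  by apply/allP => x xs; rewrite (allP s_pos x xs) -sk sumnE (big_rem x xs) leq_addr.
have cnt_le (i : 'I_k) : (count_mem i.+1 s < k.+1)%N.
  rewrite ltnS -[X in (_ <= X)%N]sk -(sum_count_mem_succ s_le) (bigD1 i) //=.
  exact: leq_trans (leq_pmull _ _) (leq_addr _ _).
pose m := [ffun i : 'I_k => Ordinal (cnt_le i)].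
have mk : (\sum_(i < k) i.+1 * m i)%N == k.
  rewrite -[X in _ == X]sk -(sum_count_mem_succ s_le).
  by apply/eqP/eq_bigr => i _; rewrite ffunE.
exists (exist _ m mk); rewrite /pmu /psprod -(prod_count_mem_succ _ s_le).
by apply: eq_bigr => i _; rewrite /= ffunE.
Qed.

Lemma sym_pmu_combination k g : g \is symmetric -> g \is k.-homog ->
  exists c : partT k -> R, g = \sum_mu c mu *: pmu R n mu.
Proof.
move=> gs gh; have [l [Hl ->]] := sym_psum_span gs gh.
elim: l Hl => [|x l IH] Hl.
  by exists (fun=> 0); rewrite big_nil big1 // => mu _; rewrite scale0r.
have [c IHc] := IH (fun y yl => Hl y (@mem_behead _ (x :: l) y yl)).
have [mu0 Emu0] := composition_pmu (Hl x (mem_head _ _)).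
exists (fun mu => c mu + x.1 * (mu == mu0)%:R); rewrite big_cons IHc -Emu0.
under [RHS]eq_bigr do rewrite scalerDl.
rewrite big_split /= addrC; congr (_ + _).
rewrite (bigD1 mu0) //= eqxx mulr1 big1 ?addr0 // => mu.
by move=> /negbTE ->; rewrite mulr0 scale0r.
Qed.
End PowerSumSpan.

Section PsdMatrices.
Variables (R : realType) (m : nat).
Implicit Types (Q : 'M[R]_m) (u v w : 'rV[R]_m).

Definition bform Q u v : R := (u *m Q *m v^T) 0 0.

Lemma psd_bform Q : psd Q -> forall u, 0 <= bform Q u u.
Proof. by case=> _ Qge0 u; have := Qge0 u^T; rewrite trmxK. Qed.

Lemma psd_entryC Q : psd Q -> forall i j, Q i j = Q j i.
Proof. by case=> QT _ i j; rewrite -[in LHS]QT mxE. Qed.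

Lemma bformC Q u v : Q^T = Q -> bform Q u v = bform Q v u.
Proof.
move=> QT; transitivity (((v *m Q *m u^T)^T) 0 0); last by rewrite mxE.
by rewrite !trmx_mul trmxK QT mulmxA.
Qed.

Lemma bformDl Q u v w : bform Q (u + v) w = bform Q u w + bform Q v w.
Proof. by rewrite /bform !mulmxDl mxE. Qed.

Lemma bformZl Q a u w : bform Q (a *: u) w = a * bform Q u w.
Proof. by rewrite /bform -!scalemxAl mxE. Qed.

Lemma bform_delta Q i j : bform Q (delta_mx 0 i) (delta_mx 0 j) = Q i j.
Proof. by rewrite /bform trmx_delta -rowE -colE !mxE. Qed.

Lemma bform_comb2 Q a b u v : Q^T = Q ->
  bform Q (a *: u + b *: v) (a *: u + b *: v) =
  a ^+ 2 * bform Q u u + 2 * a * b * bform Q u v + b ^+ 2 * bform Q v v.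
Proof.
move=> QT; rewrite !(bformDl, bformZl) ![bform Q _ (_ + _)]bformC //.
by rewrite !(bformDl, bformZl) (bformC v u QT); ring.
Qed.

Lemma psd_of_bform Q : Q^T = Q -> (forall u, 0 <= bform Q u u) -> psd Q.
Proof. by move=> QT Qge0; split=> // v; have := Qge0 v^T; rewrite /bform trmxK. Qed.

Lemma psd_diag_eq0 Q i j : psd Q -> Q i i = 0 -> Q i j = 0.
Proof.
move=> pQ Qii; have [//|Qij] := eqVneq (Q i j) 0.
pose t := - (Q j j + 1) / (2 * Q i j). (* makes the form -1 at t e_i + e_j *)
have := psd_bform pQ (t *: delta_mx 0 i + 1 *: delta_mx 0 j).
rewrite bform_comb2 ?(proj1 pQ) // !bform_delta Qii.
have -> : t ^+ 2 * 0 + 2 * t * 1 * Q i j + 1 ^+ 2 * Q j j = -1 by rewrite /t; field.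
by rewrite ler0N1.
Qed.

Lemma rank1_mxE (u v : 'rV[R]_m) i j : (u^T *m v) i j = u 0 i * v 0 j.
Proof. by rewrite mxE big_ord1 !mxE. Qed.

Lemma psd_schur_complement Q i : psd Q -> 0 < Q i i ->
  psd (Q - (Q i i)^-1 *: ((row i Q)^T *m row i Q)).
Proof.
move=> pQ a_gt0; set a := Q i i; set r := row i Q.
apply: psd_of_bform => [|u].
  by rewrite linearB linearZ /= trmx_mul trmxK (proj1 pQ).
pose s := bform Q (delta_mx 0 i) u.
have rE : r = delta_mx 0 i *m Q by rewrite -rowE.
have Eu : bform (Q - a^-1 *: (r^T *m r)) u u = bform Q u u - a^-1 * s ^+ 2.
  rewrite /bform mulmxBr mulmxBl -scalemxAr -scalemxAl mxE [X in _ + X]mxE [X in _ - X]mxE.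
  congr (_ - _ * _); rewrite !mulmxA -(mulmxA (u *m r^T)) mxE big_ord1.
  have -> : u *m r^T = (r *m u^T)^T by rewrite trmx_mul trmxK.
  by rewrite mxE expr2 /s /bform rE.
have := psd_bform pQ (1 *: u + (- (s / a)) *: delta_mx 0 i).
rewrite bform_comb2 ?(proj1 pQ) // bform_delta (bformC _ _ (proj1 pQ)) -/s Eu.
have a_neq0 : a != 0 by rewrite gt_eqF.
by rewrite -/a; congr (0 <= _); field.
Qed.

Lemma psd_rank1_sum Q : psd Q -> exists l : seq 'rV[R]_m, Q = \sum_(v <- l) v^T *m v.
Proof.
(* Symmetric Gaussian elimination, row [k] being the pivot at step [k]: a zero
   pivot forces a zero row, a positive one splits off a rank-one term. *)
suff: forall k Q, psd Q -> (forall i j : 'I_m, (k <= i)%N -> Q i j = 0) ->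
    exists l : seq 'rV[R]_m, Q = \sum_(v <- l) v^T *m v.
  by move=> /(_ m Q) H pQ; apply: H => // i j; rewrite leqNgt ltn_ord.
elim=> [|k IH] {}Q pQ Qk.
  by exists [::]; apply/matrixP => i j; rewrite big_nil mxE Qk.
have [km|mk] := ltnP k m; last first.
  by apply: IH => // i j ki; have := ltn_ord i; rewrite ltnNge (leq_trans mk ki).
pose i0 := Ordinal km; set a := Q i0 i0.
have i0E (i : 'I_m) : (k <= i)%N -> (i = i0) \/ (k < i)%N.
  by rewrite leq_eqVlt => /orP[/eqP ki|]; [left; apply: val_inj|right].
have a_ge0 : 0 <= a by have := psd_bform pQ (delta_mx 0 i0); rewrite bform_delta.
have [a0|a_neq0] := eqVneq a 0.
  by apply: IH => // i j /i0E[->|/Qk //]; exact: psd_diag_eq0.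
have a_gt0 : 0 < a by rewrite lt_def a_neq0.
pose Q' := Q - a^-1 *: ((row i0 Q)^T *m row i0 Q).
have Q'k (i j : 'I_m) : (k <= i)%N -> Q' i j = 0.
  move=> /i0E[->|ki]; rewrite mxE [X in _ + X]mxE [X in - X]mxE rank1_mxE !mxE -/a.
    by field.
  by rewrite (Qk i j ki) (psd_entryC pQ i0 i) (Qk i i0 ki) !mul0r mulr0 subr0.
have [l El] := IH Q' (psd_schur_complement pQ a_gt0) Q'k.
exists ((Num.sqrt a)^-1 *: row i0 Q :: l); rewrite big_cons -El.
rewrite -scalemxAr linearZ /= -scalemxAl scalerA -invfM -expr2 sqr_sqrtr //.
by rewrite addrC subrK.
Qed.

Lemma psd0 : psd (0 : 'M[R]_m).
Proof. by apply: psd_of_bform => [|u]; rewrite ?trmx0 // /bform mulmx0 mul0mx mxE. Qed.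

Lemma psdD Q1 Q2 : psd Q1 -> psd Q2 -> psd (Q1 + Q2).
Proof.
move=> p1 p2; apply: psd_of_bform => [|u].
  by rewrite linearD /= (proj1 p1) (proj1 p2).
by rewrite /bform mulmxDr mulmxDl mxE addr_ge0 // psd_bform.
Qed.

Lemma psdZ c Q : 0 <= c -> psd Q -> psd (c *: Q).
Proof.
move=> c0 pQ; apply: psd_of_bform => [|u]; first by rewrite linearZ /= (proj1 pQ).
by rewrite /bform -scalemxAr -scalemxAl mxE mulr_ge0 // psd_bform.
Qed.

Lemma psd_mul_tr p (W : 'M[R]_(m, p)) : psd (W *m W^T).
Proof.
apply: psd_of_bform => [|u]; first by rewrite trmx_mul trmxK.
rewrite /bform mulmxA -(mulmxA (u *m W)) -trmx_mul mxE.
by apply: sumr_ge0 => k _; rewrite [X in _ * X]mxE -expr2 sqr_ge0.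
Qed.
End PsdMatrices.

Lemma sqr_sum_scale (R : comNzRingType) (A : comAlgType R) (I : finType)
    (c : I -> R) (F : I -> A) :
  (\sum_i c i *: F i) ^+ 2 = \sum_i \sum_j (c i * c j) *: (F j * F i).
Proof.
rewrite expr2 mulr_suml; apply: eq_bigr => i _; rewrite mulr_sumr.
by apply: eq_bigr => j _; rewrite -scalerAl -scalerAr scalerA [F i * _]mulrC.
Qed.

Lemma sum_pairs_diff_mul (R : comNzRingType) n (x y : 'I_n -> R) :
  \sum_k \sum_l (x k - x l) * (y k - y l) =
  (2 * n)%:R * \sum_k x k * y k - 2%:R * ((\sum_k x k) * (\sum_k y k)).
Proof.
have e k l : (x k - x l) * (y k - y l) =
    (x k * y k + x l * y l) - (x k * y l + x l * y k) by ring.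
under eq_bigr => k _ do rewrite (eq_bigr _ (fun l _ => e k l)) sumrB.
rewrite sumrB; congr (_ - _).
  under eq_bigr => k _ do rewrite big_split /= sumr_const card_ord.
  by rewrite big_split /= sumr_const card_ord sumrMnl -mulrnDr mulr_natl addnn -mul2n.
under eq_bigr => k _ do rewrite big_split /= -mulr_sumr -mulr_suml.
by rewrite big_split /= -mulr_suml -mulr_sumr [(\sum_l x l) * _]mulrC mulr_natl mulr2n.
Qed.

Section Symmetrization.
Variables (R : numFieldType) (n : nat).
Local Notation P := {mpoly R[n]}.

Definition symavg (p : P) : P := (#|{: 'S_n}|%:R)^-1 *: \sum_(s : 'S_n) msym s p.

Lemma symavg_is_linear : linear symavg.
Proof.
move=> c p q; rewrite /symavg scalerA mulrC -scalerA -scalerDr; congr (_ *: _).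
by rewrite scaler_sumr -big_split; apply: eq_bigr => s _; rewrite msymD msymZ.
Qed.

HB.instance Definition _ := GRing.isLinear.Build R P P _ symavg symavg_is_linear.

Lemma symavg_id p : p \is symmetric -> symavg p = p.
Proof.
move/issymP => ps; rewrite /symavg (eq_bigr (fun=> p)) // sumr_const -scaler_nat.
by rewrite scalerA mulVf ?scale1r // pnatr_eq0 -lt0n; apply/card_gt0P; exists 1%g.
Qed.

Lemma symavgMl p q : p \is symmetric -> symavg (p * q) = p * symavg q.
Proof.
move/issymP => ps; rewrite /symavg -scalerAr mulr_sumr.
by congr (_ *: _); apply: eq_bigr => s _; rewrite msymM ps.
Qed.

Lemma symavg_msym s p : symavg (msym s p) = symavg p.
Proof.
rewrite /symavg; congr (_ *: _); rewrite [RHS](reindex_inj (mulgI s)) /=.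
by apply: eq_bigr => t _; rewrite msymMm.
Qed.

Lemma msym_var (s : 'S_n) i : msym s ('X_i : P) = 'X_(s i).
Proof. by rewrite /msym mmapX mmap1U. Qed.

Lemma perm_pair (i j k l : 'I_n) : i != j -> k != l ->
  exists s : 'S_n, s i = k /\ s j = l.
Proof.
move=> ij kl; exists (tperm i k * tperm (tperm i k j) l)%g.
rewrite !permM tpermL; split; last by rewrite tpermL.
apply: tpermD; last by rewrite eq_sym.
by rewrite -{2}(tpermL i k) (inj_eq perm_inj) eq_sym.
Qed.

Lemma symavg_var_pair a b (i j k l : 'I_n) : i != j -> k != l ->
  symavg ('X_i ^+ a * 'X_j ^+ b) = symavg ('X_k ^+ a * 'X_l ^+ b).
Proof.
move=> ij kl; have [s [si sj]] := perm_pair ij kl.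
by rewrite -(symavg_msym s) msymM !rmorphXn /= !msym_var si sj.
Qed.
End Symmetrization.

Section PowerSumAverages.
Variables (R : realType) (n : nat).
Local Notation P := {mpoly R[n]}.
Local Notation ps := (psum R n).

Lemma psum_sym j : ps j \is symmetric.
Proof.
apply/issymP => s; rewrite /psum msymZ (raddf_sum (msym s)); congr (_ *: _).
rewrite [RHS](reindex_inj (@perm_inj _ s)) /=.
by apply: eq_bigr => i _; rewrite rmorphXn /= msym_var.
Qed.

Lemma psum_homog j : ps j \is j.-homog.
Proof.
apply: dhomogZ; apply: rpred_sum => i _.
have Xi : ('X_i : P) \is 1.-homog by rewrite dhomogX /= mdeg1.
by have := dhomogMn j Xi; rewrite mul1n.
Qed.

Lemma pmu_sym k (mu : partT k) : pmu R n mu \is symmetric.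
Proof. by apply: rpred_prod => i _; apply/rpredX/psum_sym. Qed.

Lemma pmu_homog k (mu : partT k) : pmu R n mu \is k.-homog.
Proof.
rewrite -[X in _ \is X.-homog](eqP (valP mu)) /pmu.
elim/big_rec2: _ => [|i d p _ hp]; first exact: dhomog1.
by apply: dhomogM => //; apply: dhomogMn; apply: psum_homog.
Qed.

Lemma symavg_var_exp c (k : 'I_n) : symavg ('X_k ^+ c) = ps c.
Proof.
have n_gt0 : (0 < n)%N by apply: leq_ltn_trans (ltn_ord k).
have nz : (n%:R : R) != 0 by rewrite pnatr_eq0 -lt0n.
have eq_l (l : 'I_n) : symavg ('X_l ^+ c : P) = symavg ('X_k ^+ c).
  by rewrite -(symavg_msym (tperm k l)) rmorphXn /= msym_var tpermR.
apply: (scalerI nz); rewrite -[in RHS](symavg_id (psum_sym c)) -[in RHS]linearZ /=.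
rewrite -sum_var_exp // linear_sum (eq_bigr _ (fun l _ => eq_l l)) /=.
by rewrite sumr_const card_ord scaler_nat.
Qed.

Lemma symavg_var_offdiag a b (k l : 'I_n) : k != l ->
  symavg ('X_k ^+ a * 'X_l ^+ b : P) =
  (n%:R - 1)^-1 *: (n%:R *: (ps a * ps b) - ps (a + b)).
Proof.
move=> kl; have n_gt1 : (1 < n)%N.
  by move: kl (ltn_ord k) (ltn_ord l); rewrite -val_eqE /=; lia.
have n_gt0 : (0 < n)%N by apply: ltnW.
have n1_neq0 : (n%:R - 1 : R) != 0 by rewrite subr_eq0 pnatr_eq1 gtn_eqF.
have nn1_neq0 : (n%:R * (n%:R - 1) : R) != 0 by rewrite mulf_neq0 // pnatr_eq0 -lt0n.
set D := symavg _.
(* Double counting: the sum of all [symavg (x_i^a x_j^b)] is the average of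
   [(n p_a) (n p_b)], and also [n] diagonal terms plus [n (n - 1)] copies of [D]. *)
have S : \sum_(i < n) \sum_(j < n) symavg ('X_i ^+ a * 'X_j ^+ b : P) =
         (n%:R * n%:R) *: (ps a * ps b).
  transitivity (symavg ((\sum_(i < n) 'X_i ^+ a) * (\sum_(j < n) 'X_j ^+ b) : P)).
    rewrite mulr_suml linear_sum; apply: eq_bigr => i _.
    by rewrite mulr_sumr linear_sum.
  rewrite !sum_var_exp // -scalerAl -scalerAr scalerA linearZ /= symavg_id //.
  exact: rpredM (psum_sym a) (psum_sym b).
have S' : \sum_(i < n) \sum_(j < n) symavg ('X_i ^+ a * 'X_j ^+ b : P) =
          n%:R *: ps (a + b) + (n%:R * (n%:R - 1)) *: D.
  rewrite (eq_bigr (fun=> ps (a + b) + (n%:R - 1) *: D)) => [|i _].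
    by rewrite sumr_const card_ord -scaler_nat scalerDr [n%:R *: (_ *: D)]scalerA.
  rewrite (bigD1 i) //= -exprD symavg_var_exp (eq_bigr (fun=> D)) => [|j ji].
    by rewrite sumr_const cardC1 card_ord -scaler_nat -subn1 natrB.
  by apply: symavg_var_pair; rewrite // eq_sym.
apply: (scalerI nn1_neq0); rewrite [RHS]scalerA mulfK // scalerBr.
by rewrite [n%:R *: (_ *: _)]scalerA -S S' [RHS]addrC addKr.
Qed.

Lemma symavg_mul_var_sums a b (V W : 'I_n -> R) :
  (1 < n)%N -> \sum_k V k = 0 -> \sum_k W k = 0 ->
  symavg ((\sum_k V k *: 'X_k ^+ a) * (\sum_l W l *: 'X_l ^+ b) : P) =
  (n%:R / (n%:R - 1) * \sum_k V k * W k) *: (ps (a + b) - ps a * ps b).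
Proof.
move=> n_gt1 V0 W0.
have n1_neq0 : (n%:R - 1 : R) != 0 by rewrite subr_eq0 pnatr_eq1 gtn_eqF.
pose D := (n%:R - 1)^-1 *: (n%:R *: (ps a * ps b) - ps (a + b)).
have XX k l : symavg ('X_k ^+ a * 'X_l ^+ b : P) =
              D + (k == l)%:R *: (ps (a + b) - D).
  case: eqVneq => [<-|kl]; last by rewrite scale0r addr0 symavg_var_offdiag.
  by rewrite scale1r addrC subrK -exprD symavg_var_exp.
set E := ps (a + b) - D.
transitivity (\sum_k (\sum_l (V k * W l) *: D +
                      \sum_l ((V k * W l) * (k == l)%:R) *: E)).
  rewrite mulr_suml linear_sum; apply: eq_bigr => k _.
  rewrite mulr_sumr linear_sum -big_split; apply: eq_bigr => l _ /=.
  rewrite -scalerAl -scalerAr scalerA linearZ /= XX scalerDr.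
  by congr (_ + _); rewrite scalerA.
rewrite big_split /= big1 ?add0r => [|k _]; last first.
  by rewrite -scaler_suml -mulr_sumr W0 mulr0 scale0r.
rewrite (eq_bigr (fun k => (V k * W k) *: E)) => [|k _]; last first.
  rewrite (bigD1 k) //= eqxx mulr1 big1 ?addr0 // => l /negbTE.
  by rewrite eq_sym => ->; rewrite mulr0 scale0r.
rewrite -scaler_suml mulrC -scalerA; congr (_ *: _).
rewrite /E /D scalerBr scalerA opprB addrA -{1}[ps (a + b)]scale1r -scalerDl.
rewrite [RHS]scalerBr.
by congr (_ *: _ - _ *: _); field.
Qed.

Lemma sum_pairs_diff_var_exp a b :
  \sum_k \sum_l ('X_k ^+ a - 'X_l ^+ a) * ('X_k ^+ b - 'X_l ^+ b) =
  (2 * n * n)%:R *: (ps (a + b) - ps a * ps b) :> P.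
Proof.
have [n0|n_gt0] := posnP n.
  by rewrite big1 ?n0 ?mul0n ?scale0r // => -[].
rewrite (sum_pairs_diff_mul (fun k => 'X_k ^+ a) (fun k => 'X_k ^+ b)) /=.
under eq_bigr do rewrite -exprD.
rewrite !sum_var_exp // !mulr_natl -!scaler_nat -scalerAl -scalerAr.
move: (ps (a + b)) (ps a * ps b) => p pp.
by rewrite !scalerA -!natrM scalerBr.
Qed.
End PowerSumAverages.

Section MatrixInnerProduct.
Variables (R : realType) (n : nat).
Local Notation P := {mpoly R[n]}.

Lemma mxinnerE m (Q : 'M[R]_m) (M : 'M[P]_m) :
  mxinner Q M = \sum_i \sum_j Q i j *: M j i.
Proof.
rewrite /mxinner /mxtrace; apply: eq_bigr => i _; rewrite mxE.
by apply: eq_bigr => j _; rewrite mxE mul_mpolyC.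
Qed.

Lemma mxinner0 m (M : 'M[P]_m) : mxinner 0 M = 0.
Proof. by rewrite mxinnerE big1 // => i _; rewrite big1 // => j _; rewrite mxE scale0r. Qed.

Lemma mxinnerD m (Q1 Q2 : 'M[R]_m) (M : 'M[P]_m) :
  mxinner (Q1 + Q2) M = mxinner Q1 M + mxinner Q2 M.
Proof.
rewrite !mxinnerE -big_split; apply: eq_bigr => i _.
by rewrite -big_split; apply: eq_bigr => j _; rewrite mxE scalerDl.
Qed.

Lemma mxinner_sum m (I : Type) (r : seq I) (F : I -> 'M[R]_m) (M : 'M[P]_m) :
  mxinner (\sum_(i <- r) F i) M = \sum_(i <- r) mxinner (F i) M.
Proof. exact: (big_morph _ (fun Q1 Q2 => mxinnerD Q1 Q2 M) (mxinner0 M)). Qed.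
End MatrixInnerProduct.

Section SosInT.
Variables (R : realType) (n d : nat).
Local Notation P := {mpoly R[n]}.
Local Notation pm := (pmu R n).
Local Notation ps := (psum R n).
Implicit Types (p q f g h : P) (al : 'rV[R]_(npart d)) (V : 'M[R]_(Nsize d, n)).

Lemma inT0 : inT d (0 : P).
Proof. by exists [::]; rewrite big_nil. Qed.

Lemma inTD p q : inT d p -> inT d q -> inT d (p + q).
Proof.
move=> [s1 [H1 ->]] [s2 [H2 ->]]; exists (s1 ++ s2); rewrite big_cat.
by split=> // x; rewrite mem_cat => /orP[/H1|/H2].
Qed.

Lemma inTZ c q : inT d q -> inT d (c *: q).
Proof.
move=> [s [H ->]]; exists [seq (c * x.1, x.2) | x <- s]; split.
  by move=> _ /mapP[x /H + ->].
by rewrite big_map scaler_sumr; apply: eq_bigr => x _; rewrite scalerA.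
Qed.

Lemma inT_gen p : T_gen d p -> inT d p.
Proof.
move=> Hp; exists [:: (1, p)]; rewrite big_seq1 scale1r; split=> // x.
by rewrite inE => /eqP ->.
Qed.

Lemma inT_sum (I : Type) (r : seq I) (F : I -> P) :
  (forall i, inT d (F i)) -> inT d (\sum_(i <- r) F i).
Proof. by move=> H; apply: big_ind => //; [exact: inT0 | exact: inTD]. Qed.

Lemma sos_TD p q : sos_T d p -> sos_T d q -> sos_T d (p + q).
Proof.
move=> [s1 [H1 ->]] [s2 [H2 ->]]; exists (s1 ++ s2); rewrite big_cat.
by split=> // x; rewrite mem_cat => /orP[/H1|/H2].
Qed.

Lemma sos_T0 : sos_T d (0 : P).
Proof. by exists [::]; rewrite big_nil. Qed.

Lemma sos_T_sum (I : Type) (r : seq I) (F : I -> P) :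
  (forall i, sos_T d (F i)) -> sos_T d (\sum_(i <- r) F i).
Proof. by move=> H; apply: big_ind => //; [exact: sos_T0 | exact: sos_TD]. Qed.

Lemma sos_T_sqr q : inT d q -> sos_T d (q ^+ 2).
Proof.
by move=> qT; exists [:: q]; rewrite big_seq1; split=> // x; rewrite inE => /eqP ->.
Qed.

Lemma sos_TZ c f : 0 <= c -> sos_T d f -> sos_T d (c *: f).
Proof.
move=> c0 [qs [qT ->]]; exists [seq Num.sqrt c *: q | q <- qs]; split.
  by move=> _ /mapP[q /qT qT' ->]; apply: inTZ.
rewrite big_map scaler_sumr; apply: eq_bigr => q _.
by rewrite exprZn sqr_sqrtr.
Qed.

Definition sym_part (al : 'rV[R]_(npart d)) : P := \sum_i al 0 i *: pm (lam i).

Definition bexp (x : 'I_(Nsize d)) : nat := (tag (enum_val x : BIdx d)).+1.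
Definition bpmu (x : 'I_(Nsize d)) : P := pm (tagged (enum_val x : BIdx d)).

(* Rows of [V] are indexed like the blocks of [B], by pairs [x = (a, mu)] with
   [a = bexp x]; row [x] stands for [p_mu * sum_k V x k * x_k^a]. *)
Definition diff_part (V : 'M[R]_(Nsize d, n)) : P :=
  \sum_x bpmu x * \sum_k V x k *: 'X_k ^+ bexp x.

Definition T_normal (q : P) : Prop :=
  exists (al : 'rV[R]_(npart d)) (V : 'M[R]_(Nsize d, n)),
    (forall x, \sum_k V x k = 0) /\ q = sym_part al + diff_part V.

Lemma sym_part_is_linear : linear sym_part.
Proof.
move=> c al1 al2; rewrite /sym_part scaler_sumr -big_split; apply: eq_bigr => i _ /=.
by rewrite !mxE scalerDl scalerA.
Qed.

HB.instance Definition _ :=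
  GRing.isLinear.Build R 'rV[R]_(npart d) P _ sym_part sym_part_is_linear.

Lemma diff_part_is_linear : linear diff_part.
Proof.
move=> c V1 V2; rewrite /diff_part scaler_sumr -big_split; apply: eq_bigr => x _ /=.
rewrite scalerAr -mulrDr scaler_sumr -big_split; congr (_ * _).
by apply: eq_bigr => k _; rewrite !mxE scalerDl scalerA.
Qed.

HB.instance Definition _ :=
  GRing.isLinear.Build R 'M[R]_(Nsize d, n) P _ diff_part diff_part_is_linear.

Lemma matBE x y : matB R n d x y =
  bpmu x * bpmu y * (ps (bexp x + bexp y) - ps (bexp x) * ps (bexp y)).
Proof. by rewrite mxE. Qed.

Lemma mxinner_rank1 m (v : 'rV[R]_m) (M : 'M[P]_m) :
  mxinner (v^T *m v) M = \sum_i \sum_j (v 0 i * v 0 j) *: M j i.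
Proof.
by rewrite mxinnerE; apply: eq_bigr => i _; apply: eq_bigr => j _; rewrite rank1_mxE.
Qed.

Lemma mxinner_A_rank1 al : mxinner (al^T *m al) (matA R n d) = sym_part al ^+ 2.
Proof.
rewrite mxinner_rank1 /sym_part sqr_sum_scale; apply: eq_bigr => i _.
by apply: eq_bigr => j _; rewrite mxE.
Qed.

Lemma sym_part_sym al : sym_part al \is symmetric.
Proof. by apply: rpred_sum => i _; apply/rpredZ/pmu_sym. Qed.

Lemma symavg_diff_part V : (forall x, \sum_k V x k = 0) -> symavg (diff_part V) = 0.
Proof.
move=> V0; rewrite linear_sum big1 // => x _ /=; rewrite symavgMl ?pmu_sym //.
rewrite linear_sum (eq_bigr (fun k => V x k *: ps (bexp x))) => [|k _].
  by rewrite -scaler_suml V0 scale0r mulr0.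
by rewrite linearZ /= symavg_var_exp.
Qed.

Lemma T_normal0 : T_normal 0.
Proof.
exists 0, 0; split; first by move=> x; rewrite big1 // => k _; rewrite mxE.
by rewrite !raddf0 addr0.
Qed.

Lemma T_normalD p q : T_normal p -> T_normal q -> T_normal (p + q).
Proof.
move=> [al1 [V1 [V10 ->]]] [al2 [V2 [V20 ->]]].
exists (al1 + al2), (V1 + V2); split; last by rewrite !raddfD addrACA.
by move=> x; under eq_bigr do rewrite mxE; rewrite big_split /= V10 V20 addr0.
Qed.

Lemma T_normalZ c q : T_normal q -> T_normal (c *: q).
Proof.
move=> [al [V [V0 ->]]]; exists (c *: al), (c *: V); split; last first.
  by rewrite !linearZ scalerDr.
by move=> x; under eq_bigr do rewrite mxE; rewrite -mulr_sumr V0 mulr0.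
Qed.

Lemma T_normal_sym h : symform d h -> T_normal h.
Proof.
move=> [hh hs]; have [c ->] := sym_pmu_combination hs hh.
exists (\row_i c (lam i)), 0; split; first by move=> x; rewrite big1 // => k _; rewrite mxE.
rewrite raddf0 addr0 /sym_part (reindex (@enum_val _ {: partT d})) /=.
  by apply: eq_bigr => i _; rewrite mxE.
by exists enum_rank => [mu _|i _]; rewrite ?enum_valK ?enum_rankK.
Qed.

Lemma T_normal_diff (a : 'I_d) (c : partT (d - a.+1) -> R) (i j : 'I_n) :
  T_normal (('X_i ^+ a.+1 - 'X_j ^+ a.+1) * \sum_mu c mu *: pm mu).
Proof.
pose cx (x : 'I_(Nsize d)) :=
  \sum_(mu : partT (d - a.+1))
    if enum_val x == Tagged (fun b : 'I_d => partT (d - b.+1)) mu then c mu else 0.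
pose V := \matrix_(x, k) (cx x * ((k == i)%:R - (k == j)%:R)).
have sum_delta (t : 'I_n) : \sum_k ((k == t)%:R : R) = 1.
  by rewrite (bigD1 t) //= eqxx big1 ?addr0 // => k /negbTE ->.
have sum_delta_scale (t : 'I_n) (F : 'I_n -> P) : \sum_k (k == t)%:R *: F k = F t.
  by rewrite (bigD1 t) //= eqxx scale1r big1 ?addr0 // => k /negbTE ->; rewrite scale0r.
exists 0, V; split.
  move=> x; under eq_bigr do rewrite mxE.
  by rewrite -mulr_sumr sumrB !sum_delta subrr mulr0.
rewrite raddf0 add0r /diff_part.
have inner x : \sum_k V x k *: 'X_k ^+ bexp x = cx x *: ('X_i ^+ bexp x - 'X_j ^+ bexp x).
  under eq_bigr do rewrite mxE -scalerA scalerBl.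
  by rewrite -scaler_sumr sumrB !sum_delta_scale.
under [RHS]eq_bigr do rewrite inner -scalerAr /cx scaler_suml.
rewrite exchange_big /= mulr_sumr; apply: eq_bigr => mu _.
set t := Tagged (fun b : 'I_d => partT (d - b.+1)) mu.
rewrite (bigD1 (enum_rank t)) //= enum_rankK eqxx big1 ?addr0.
  by rewrite /bpmu /bexp enum_rankK -scalerAr mulrC.
move=> x xt; case: eqP => [ext|_]; last by rewrite scale0r.
by move: xt; rewrite -ext enum_valK eqxx.
Qed.

Lemma T_normal_gen p : T_gen d p -> T_normal p.
Proof.
case=> [[s [h [[hh hs] ->]]]|[s [a [i [j [g [ha _ _ [gh gs] ->]]]]]]].
  by have /issymP -> := hs; apply: T_normal_sym.
have /issymP gsym := gs.
rewrite msymM msymB !rmorphXn /= !msym_var gsym.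
have [c ->] := sym_pmu_combination gs gh.
clear gs gh gsym; case: a ha c => // a /andP[_ ad] c.
exact: (@T_normal_diff (Ordinal ad) c).
Qed.

Lemma inT_T_normal q : inT d q -> T_normal q.
Proof.
move=> [s [sT ->]]; rewrite big_seq.
apply: big_ind => [||x xs]; [exact: T_normal0 | exact: T_normalD |].
exact/T_normalZ/T_normal_gen/sT.
Qed.

Lemma sym_part_inT al : inT d (sym_part al).
Proof.
apply: inT_sum => i; apply/inTZ/inT_gen; left.
exists 1%g, (pm (lam i)); rewrite msym1m; split=> //.
by split; [apply: pmu_homog | apply: pmu_sym].
Qed.

Lemma sos_T_matA Q : psd Q -> sos_T d (mxinner Q (matA R n d)).
Proof.
move=> /psd_rank1_sum[l ->]; rewrite mxinner_sum; apply: sos_T_sum => v.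
by rewrite mxinner_A_rank1; apply/sos_T_sqr/sym_part_inT.
Qed.

(* Only used to get [1 < n] as soon as [d > 0]. *)
Hypothesis n_ge2d : (2 * d <= n)%N.

Lemma Nsize_n_gt1 (x : 'I_(Nsize d)) : (1 < n)%N.
Proof.
have : (0 < d)%N by case: (enum_val x : BIdx d) => -[a ad] _; apply: leq_ltn_trans ad.
by move: n_ge2d; lia.
Qed.

Lemma symavg_diff_part_sqr V : (forall x, \sum_k V x k = 0) ->
  symavg (diff_part V ^+ 2) =
  mxinner ((n%:R / (n%:R - 1)) *: (V *m V^T)) (matB R n d).
Proof.
move=> V0; rewrite mxinnerE expr2 /diff_part mulr_suml linear_sum.
apply: eq_bigr => x _; rewrite mulr_sumr linear_sum; apply: eq_bigr => y _ /=.
rewrite mulrACA symavgMl ?rpredM ?pmu_sym // symavg_mul_var_sums ?V0 //.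
  rewrite -scalerAr matBE !mxE [bpmu y * _]mulrC addnC [ps (bexp y) * _]mulrC.
  by congr (_ *: _); congr (_ * _); apply: eq_bigr => k _; rewrite mxE.
exact: Nsize_n_gt1 x.
Qed.

Lemma n_div_pred_ge0 : 0 <= (n%:R : R) / (n%:R - 1).
Proof.
have [->|n_gt0] := posnP n; first by rewrite mul0r.
by rewrite divr_ge0 // subr_ge0 ler1n.
Qed.

Lemma symavg_T_normal_sqr q : T_normal q ->
  exists (Q1 : 'M[R]_(npart d)) (Q2 : 'M[R]_(Nsize d)), [/\ psd Q1, psd Q2 &
    symavg (q ^+ 2) = mxinner Q1 (matA R n d) + mxinner Q2 (matB R n d)].
Proof.
case=> al [V [V0 ->]].
exists (al^T *m al), ((n%:R / (n%:R - 1)) *: (V *m V^T)); split.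
- by have := psd_mul_tr al^T; rewrite trmxK.
- exact: psdZ n_div_pred_ge0 (psd_mul_tr V).
rewrite sqrrD !linearD /= symavg_id ?rpredX ?sym_part_sym //.
rewrite symavgMl ?sym_part_sym // symavg_diff_part // mulr0 !addr0.
by rewrite mxinner_A_rank1 symavg_diff_part_sqr.
Qed.

Lemma sos_T_gram f : f \is symmetric -> sos_T d f ->
  exists (Q1 : 'M[R]_(npart d)) (Q2 : 'M[R]_(Nsize d)),
    [/\ psd Q1, psd Q2 & f = mxinner Q1 (matA R n d) + mxinner Q2 (matB R n d)].
Proof.
move=> fs [qs [qT Ef]]; rewrite -(symavg_id fs) Ef linear_sum /= {f fs Ef}.
elim: qs qT => [_|q qs IH qT].
  by exists 0, 0; rewrite big_nil !mxinner0 addr0; split => //; apply: psd0.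
have [Q1 [Q2 [p1 p2 E]]] := IH (fun r rq => qT r (@mem_behead _ (q :: qs) r rq)).
have [Q1' [Q2' [p1' p2' E']]] :=
  symavg_T_normal_sqr (inT_T_normal (qT q (mem_head _ _))).
exists (Q1' + Q1), (Q2' + Q2); split; try exact: psdD.
by rewrite big_cons E E' !mxinnerD addrACA.
Qed.

Lemma var_diff_inT e g (k l : 'I_n) : (0 < e <= d)%N -> symform (d - e) g ->
  inT d (('X_k ^+ e - 'X_l ^+ e) * g).
Proof.
move=> ed [gh gs]; have [->|kl] := eqVneq k l; first by rewrite subrr mul0r; apply: inT0.
have n_gt1 : (1 < n)%N by move: ed n_ge2d; lia.
pose i0 : 'I_n := Ordinal (ltnW n_gt1); pose i1 : 'I_n := Ordinal n_gt1.
have [s [si0 si1]] := @perm_pair _ i0 i1 k l isT kl.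
apply: inT_gen; right; exists s, e, i0, i1, g; split => //.
by rewrite msymM msymB !rmorphXn /= !msym_var si0 si1 (issymP _ gs).
Qed.

Lemma mxinner_B_rank1 (v : 'rV[R]_(Nsize d)) :
  (2 * n * n)%:R *: mxinner (v^T *m v) (matB R n d) =
  \sum_k \sum_l (\sum_x v 0 x *: (('X_k ^+ bexp x - 'X_l ^+ bexp x) * bpmu x)) ^+ 2.
Proof.
pose F k l x : P := ('X_k ^+ bexp x - 'X_l ^+ bexp x) * bpmu x.
transitivity (\sum_x \sum_y (v 0 x * v 0 y) *: \sum_k \sum_l F k l y * F k l x).
  rewrite mxinner_rank1 scaler_sumr; apply: eq_bigr => x _.
  rewrite scaler_sumr; apply: eq_bigr => y _.
  rewrite [LHS]scalerA (mulrC (2 * n * n)%:R) -[LHS]scalerA; congr (_ *: _).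
  rewrite matBE scalerAr -sum_pairs_diff_var_exp mulrC.
  rewrite big_distrl; apply: eq_bigr => k _ /=.
  by rewrite big_distrl; apply: eq_bigr => l _ /=; rewrite /F mulrACA.
under [RHS]eq_bigr do under eq_bigr do rewrite sqr_sum_scale.
under [RHS]eq_bigr do rewrite exchange_big /=.
under [RHS]eq_bigr do under eq_bigr do rewrite exchange_big /=.
rewrite [RHS]exchange_big /=; under [RHS]eq_bigr do rewrite exchange_big /=.
apply: eq_bigr => x _; apply: eq_bigr => y _.
by rewrite scaler_sumr; apply: eq_bigr => k _; rewrite scaler_sumr.
Qed.

Lemma sos_T_matB Q : psd Q -> sos_T d (mxinner Q (matB R n d)).
Proof.
move=> /psd_rank1_sum[l ->]; rewrite mxinner_sum; apply: sos_T_sum => v.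
have [n0|n_gt0] := posnP n.
  rewrite mxinner_rank1 big1 => [|x _]; first exact: sos_T0.
  by have := Nsize_n_gt1 x; rewrite n0.
have nn : ((2 * n * n)%:R : R) != 0 by rewrite pnatr_eq0 -lt0n !muln_gt0 n_gt0.
rewrite -[mxinner _ _]scale1r -(mulVf nn) -scalerA mxinner_B_rank1.
apply: sos_TZ; first by rewrite invr_ge0.
do 2![apply: sos_T_sum => ?]; apply/sos_T_sqr/inT_sum => x; apply/inTZ/var_diff_inT.
  by rewrite /bexp /= ltn_ord.
by split; [apply: pmu_homog | apply: pmu_sym].
Qed.
End SosInT.

Theorem lemma5p1 (R : realType) (n d : nat) (f : {mpoly R[n]}) :
  (2 * d <= n)%N ->
  symform (2 * d) f ->
  sos_T d f <->
  exists (Q1 : 'M[R]_(npart d)) (Q2 : 'M[R]_(Nsize d)),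
    [/\ psd Q1, psd Q2 & f = mxinner Q1 (matA R n d) + mxinner Q2 (matB R n d)].
Proof.
move=> dn [_ fs]; split; first exact: sos_T_gram.
by move=> [Q1 [Q2 [pQ1 pQ2 ->]]]; apply: sos_TD; [exact: sos_T_matA | exact: sos_T_matB].
Qed.
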